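(* In the setting described in the context, let \texttt{Orienteering} be a routine that solves the orienteering problem within constant factor $1/\lambda$ (with $\lambda\ge 1$): for any node weights $\nu(j)\ge 0$ it returns a path $\hat\rho\in\mathcal{X}(p_s,\omega)$ such that for every path $\rho\in\mathcal{X}(p_s,\omega)$, $$\sum_{j=1}^V \mathbb{I}_j(\hat{\rho})\nu(j) \ge \frac{1}{\lambda}\sum_{j=1}^V \mathbb{I}_j(\rho)\nu(j).$$ Let $c_j>0$ for $j=1,\dots,V$, and let $\hat\rho$ be the path returned by \texttt{Orienteering} with node weights $\nu(j)=\zeta_j c_j$. Then for every $\rho\in\mathcal{X}(p_s,\omega)$, $$\sum_{j=1}^Vc_j\,\mathbb{E}[z_j(\hat{\rho})] \ge \frac{p_s}{\lambda}\sum_{j=1}^V c_j\,\mathbb{E}[z_j(\rho)].$$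
   Context: Let $\mathcal{G}=(\mathcal{V},\mathcal{E})$ be a finite simple graph with node set $\mathcal{V}=\{1,\dots,V\}$ and edge weights $\omega:\mathcal{E}\to(0,1]$ (survival probabilities). A path $\rho$ is a sequence of nodes $\rho(0),\dots,\rho(\lvert\rho\rvert)$ with $(\rho(n-1),\rho(n))\in\mathcal{E}$ for each $n$. For a path $\rho$, let $s_n(\rho)$, $n=1,\dots,\lvert\rho\rvert$, be independent Bernoulli variables with $\mathbb{P}\{s_n(\rho)=1\}=\omega((\rho(n-1),\rho(n)))$, $a_n(\rho)=\prod_{i=1}^n s_i(\rho)$, and $z_j(\rho)=\max_{n=1,\dots,\lvert\rho\rvert} a_n(\rho)\,\mathbb{I}\{\rho(n)=j\}$. Let $\mathbb{I}_j(\rho)$ equal $1$ if $\rho(n)=j$ for some $n\in\{1,\dots,\lvert\rho\rvert\}$ and $0$ otherwise. Given start node $v_s$, terminal node $v_t$ and $p_s\in(0,1]$, $\mathcal{X}(p_s,\omega)$ is the (assumed nonempty) set of paths $\rho$ with $\rho(0)=v_s$, $\rho(\lvert\rho\rvert)=v_t$ and $\mathbb{P}\{a_{\lvert\rho\rvert}(\rho)=1\}\ge p_s$ (equivalently $\sum_{e\in\rho}-\log\omega(e)\le-\log p_s$). Define $\zeta_j=\max_{\rho\in\mathcal{X}(p_s,\omega)}\mathbb{E}[z_j(\rho)]$ (with $\zeta_j=0$ if no feasible path reaches $j$). *)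

From HB Require Import structures.
From mathcomp Require Import all_boot all_order all_algebra.
From mathcomp Require Import all_classical all_reals.
Set Implicit Arguments. Unset Strict Implicit. Unset Printing Implicit Defensive.
Import Order.TTheory GRing.Theory Num.Theory.
Local Open Scope ring_scope.

(* Nodes are 'I_V (node j of the paper is the ordinal j-1).
   A path rho is a nonempty sequence [rho(0); rho(1); ...; rho(|rho|)]
   of nodes; rho(n) := nth default rho n. *)

Section Defs.
Variables (R : realType) (V : nat).
Implicit Types (rho : seq 'I_V).

Definition plen rho : nat := (size rho).-1.

Definition pnode (d : 'I_V) rho (n : nat) : 'I_V := nth d rho n.

Definition is_path (e : rel 'I_V) (vs vt : 'I_V) rho : bool :=
  [&& rho != [::], head vs rho == vs, last vs rho == vt & path e vs (behead rho)].

(* survival probability of the n-th step (n = 1..|rho|): omega(rho(n-1),rho(n)) *)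
Definition stepw (omega : 'I_V -> 'I_V -> R) (d : 'I_V) rho (n : nat) : R :=
  omega (pnode d rho n.-1) (pnode d rho n).

(* Outcome space of (s_1,...,s_|rho|): s i = s_(i+1) *)
Definition outcome rho := {ffun 'I_(plen rho) -> bool}.

Definition out_prob omega d rho (s : outcome rho) : R :=
  \prod_(i < plen rho) (if s i then stepw omega d rho i.+1
                        else 1 - stepw omega d rho i.+1).

Definition Expect omega d rho (X : outcome rho -> R) : R :=
  \sum_(s : outcome rho) @out_prob omega d rho s * X s.

Definition a_var rho (n : nat) (s : outcome rho) : R :=
  \prod_(i < plen rho | (i < n)%N) ((s i)%:R : R).

(* z_j(rho) = max_{n=1..|rho|} a_n(rho) * I{rho(n) = j}  (max over empty range = 0) *)
Definition z_var (d : 'I_V) rho (j : 'I_V) (s : outcome rho) : R :=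
  \big[Num.max/0]_(i < plen rho)
     (@a_var rho i.+1 s * ((pnode d rho i.+1 == j) : bool)%:R).

Definition Ez omega d rho (j : 'I_V) : R := @Expect omega d rho (@z_var d rho j).

Definition Psurv omega d rho : R :=
  @Expect omega d rho (fun s => ((@a_var rho (plen rho) s == 1) : bool)%:R).

Definition Ivis rho (j : 'I_V) : R := ((j \in behead rho) : bool)%:R.

Definition feasible e omega vs vt (ps : R) rho : Prop :=
  is_path e vs vt rho /\ ps <= Psurv omega vs rho.

(* zeta_j = max over feasible paths of E[z_j(rho)] (taken as the supremum;
   it equals 0 when no feasible path reaches j) *)
Definition zeta e omega vs vt (ps : R) (j : 'I_V) : R :=
  sup [set Ez omega vs rho j | rho in [set rho | feasible e omega vs vt ps rho]]%classic.

End Defs.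
Arguments Ivis {R V} rho j.

From HB Require Import structures.
From mathcomp Require Import all_boot all_order all_algebra.
From mathcomp Require Import all_classical all_reals.
Set Implicit Arguments. Unset Strict Implicit. Unset Printing Implicit Defensive.
Import Order.TTheory GRing.Theory Num.Theory.
Local Open Scope ring_scope.

(* Along any feasible path the survival indicator [a_|rho|] lies below
   [z_j] for every visited node [j], so [E[z_j] >= p_s] there, while
   [E[z_j] = 0] off the path and [E[z_j] <= zeta_j <= 1] everywhere. Hence
   [c_j E[z_j(rho)] <= I_j(rho) zeta_j c_j] and
   [p_s I_j(rhohat) zeta_j c_j <= c_j E[z_j(rhohat)]]; summing over [j] and
   inserting the approximation guarantee of the oracle between the two
   bounds gives the claim. *)

Section PathVariables.
Variables (R : realType) (V : nat) (rho : seq 'I_V).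
Implicit Types (s : outcome rho) (d j : 'I_V).

Lemma a_varE n s :
  a_var R n s = [forall i : 'I_(plen rho), (i < n)%N ==> s i]%:R.
Proof.
rewrite /a_var; case: (boolP [forall _, _]) => [/forallP all_s | /forallPn[i]].
  by rewrite big1 // => i lt_in; rewrite (implyP (all_s i) lt_in).
by rewrite negb_imply => /andP[lt_in /negbTE si]; rewrite (bigD1 i) //= si mul0r.
Qed.

Lemma a_var_le1 n s : a_var R n s <= 1.
Proof. by rewrite a_varE lern1 leq_b1. Qed.

Lemma a_var_eq1 n s : ((a_var R n s == 1) : bool)%:R = a_var R n s.
Proof. by rewrite a_varE; case: [forall _, _]; rewrite ?eqxx // eq_sym oner_eq0. Qed.

Lemma a_var_le m n s : (m <= n)%N -> a_var R n s <= a_var R m s.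
Proof.
move=> le_mn; rewrite !a_varE ler_nat.
case: (boolP [forall _, _]) => [/forallP all_n | _] //=.
rewrite lt0b; apply/forallP => i; apply/implyP => lt_im.
exact: implyP (all_n i) (leq_trans lt_im le_mn).
Qed.

Lemma z_var_ge0 d j s : 0 <= z_var R d j s.
Proof. exact: bigmax_ge_id. Qed.

Lemma z_var_le1 d j s : z_var R d j s <= 1.
Proof.
apply: bigmax_le => [|i _]; first exact: ler01.
by case: (_ == _); rewrite ?mulr1 ?mulr0 ?a_var_le1 ?ler01.
Qed.

Lemma a_var_le_z_var d j (k : 'I_(plen rho)) s :
  pnode d rho k.+1 = j -> a_var R k.+1 s <= z_var R d j s.
Proof. by move=> visit_k; apply: (bigmax_sup k) => //; rewrite visit_k eqxx mulr1. Qed.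

Lemma z_var_eq0 d j s : j \notin behead rho -> z_var R d j s = 0.
Proof.
move=> j_off; apply: bigmax_eq_id => i _.
suff -> : pnode d rho i.+1 == j = false by rewrite mulr0.
apply: contraNF j_off => /eqP <-.
by rewrite /pnode -nth_behead mem_nth // size_behead ltn_ord.
Qed.

End PathVariables.

Section Expectation.
Variables (R : realType) (V : nat) (omega : 'I_V -> 'I_V -> R) (d : 'I_V).
Variable rho : seq 'I_V.

Lemma sum_out_prob : \sum_(s : outcome rho) out_prob omega d s = 1.
Proof.
transitivity (\prod_(i < plen rho) \sum_(b : bool)
   (if b then stepw omega d rho i.+1 else 1 - stepw omega d rho i.+1)).
  by rewrite bigA_distr_bigA.
by rewrite big1 // => i _; rewrite big_bool /= addrC subrK.
Qed.

Lemma Expect_cst (k : R) : Expect omega d (fun _ : outcome rho => k) = k.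
Proof. by rewrite /Expect -mulr_suml sum_out_prob mul1r. Qed.

Lemma Ez_eq0 j : j \notin behead rho -> Ez omega d rho j = 0.
Proof.
move=> j_off; rewrite -(Expect_cst 0).
by apply: eq_bigr => s _; rewrite z_var_eq0.
Qed.

Hypothesis stepw01 :
  forall i, (i < plen rho)%N -> 0 <= stepw omega d rho i.+1 <= 1.

Lemma out_prob_ge0 (s : outcome rho) : 0 <= out_prob omega d s.
Proof.
apply: prodr_ge0 => i _; have /andP[w_ge0 w_le1] := stepw01 (ltn_ord i).
by case: (s i); rewrite ?subr_ge0.
Qed.

Lemma ler_Expect (X Y : outcome rho -> R) :
  (forall s, X s <= Y s) -> Expect omega d X <= Expect omega d Y.
Proof. by move=> le_XY; apply: ler_sum => s _; rewrite ler_wpM2l ?out_prob_ge0. Qed.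

End Expectation.

Section FeasiblePaths.
Variables (R : realType) (V : nat) (e : rel 'I_V) (omega : 'I_V -> 'I_V -> R).
Variables (vs vt : 'I_V) (ps : R).
Hypothesis omega01 : forall u v, e u v -> 0 < omega u v <= 1.

Local Notation feasible := (feasible e omega vs vt ps).
Local Notation zeta := (zeta e omega vs vt ps).

Lemma feasible_stepw01 rho : feasible rho ->
  forall i, (i < plen rho)%N -> 0 <= stepw omega vs rho i.+1 <= 1.
Proof.
case=> /and4P[+ /eqP + _ e_path] _; case: rho e_path => //= x r e_path _ -> i lt_ir.
by rewrite /stepw /pnode /=; have /omega01/andP[/ltW -> ->] := pathP vs e_path i lt_ir.
Qed.

Lemma Ez_ge0 rho j : feasible rho -> 0 <= Ez omega vs rho j.
Proof.
move=> /feasible_stepw01 w01; rewrite -(Expect_cst omega vs rho 0).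
exact: ler_Expect (fun s => z_var_ge0 _ _ _ s).
Qed.

Lemma Ez_le1 rho j : feasible rho -> Ez omega vs rho j <= 1.
Proof.
move=> /feasible_stepw01 w01; rewrite -(Expect_cst omega vs rho 1).
exact: ler_Expect (fun s => z_var_le1 _ _ _ s).
Qed.

Lemma Ez_ge_ps rho j : feasible rho -> j \in behead rho -> ps <= Ez omega vs rho j.
Proof.
move=> feas_rho j_on; have w01 := feasible_stepw01 feas_rho.
have lt_k : (index j (behead rho) < plen rho)%N by rewrite /plen -size_behead index_mem.
have visit_k : pnode vs rho (Ordinal lt_k).+1 = j by rewrite /pnode -nth_behead nth_index.
apply: le_trans feas_rho.2 _; rewrite /Psurv /Ez; apply: ler_Expect => // s.
by rewrite a_var_eq1 (le_trans (a_var_le R s lt_k)) ?(a_var_le_z_var R s visit_k).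
Qed.

Hypothesis feasible_ex : exists rho, feasible rho.

Let Ez_feasible j := [set Ez omega vs rho j | rho in [set rho | feasible rho]]%classic.

Let Ez_feasible_neq0 j : (Ez_feasible j !=set0)%classic.
Proof. by have [rho feas_rho] := feasible_ex; exists (Ez omega vs rho j), rho. Qed.

Let Ez_feasible_ub1 j : ubound (Ez_feasible j) 1.
Proof. by move=> _ [rho feas_rho <-]; exact: Ez_le1. Qed.

Lemma Ez_le_zeta rho j : feasible rho -> Ez omega vs rho j <= zeta j.
Proof.
move=> feas_rho; apply: sup_upper_bound; last by exists rho.
by split; [exact: Ez_feasible_neq0 | exists 1; exact: Ez_feasible_ub1].
Qed.

Lemma zeta_ge0 j : 0 <= zeta j.
Proof.
have [rho feas_rho] := feasible_ex.
by rewrite (le_trans (Ez_ge0 j feas_rho)) ?Ez_le_zeta.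
Qed.

Lemma zeta_le1 j : zeta j <= 1.
Proof. by apply: ge_sup; [exact: Ez_feasible_neq0 | exact: Ez_feasible_ub1]. Qed.

Lemma Ez_le_Ivis_zeta rho j : feasible rho -> Ez omega vs rho j <= Ivis rho j * zeta j.
Proof.
move=> feas_rho; rewrite /Ivis; case: (boolP (j \in behead rho)) => [_ | j_off].
  by rewrite mul1r Ez_le_zeta.
by rewrite mul0r Ez_eq0.
Qed.

Lemma Ivis_zeta_le_Ez rho j : 0 <= ps -> feasible rho ->
  ps * (Ivis rho j * zeta j) <= Ez omega vs rho j.
Proof.
move=> ps_ge0 feas_rho; rewrite /Ivis; case: (boolP (j \in behead rho)) => [j_on | _].
  by rewrite mul1r (le_trans _ (Ez_ge_ps feas_rho j_on)) // ler_piMr ?zeta_le1.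
by rewrite mul0r mulr0 Ez_ge0.
Qed.

End FeasiblePaths.

Theorem lemma2 (R : realType) (V : nat) (e : rel 'I_V)
  (omega : 'I_V -> 'I_V -> R) (vs vt : 'I_V) (ps lambda : R)
  (Orienteering : ('I_V -> R) -> seq 'I_V) (c : 'I_V -> R) :
  irreflexive e -> symmetric e ->
  (forall u v, e u v -> 0 < omega u v <= 1) ->
  (forall u v, omega u v = omega v u) ->
  0 < ps <= 1 ->
  (exists rho, feasible e omega vs vt ps rho) ->
  1 <= lambda ->
  (forall nu : 'I_V -> R, (forall j, 0 <= nu j) ->
     feasible e omega vs vt ps (Orienteering nu) /\
     forall rho, feasible e omega vs vt ps rho ->
       \sum_(j < V) Ivis (Orienteering nu) j * nu j >=
       lambda^-1 * \sum_(j < V) Ivis rho j * nu j) ->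
  (forall j, 0 < c j) ->
  let rhohat := Orienteering (fun j => zeta e omega vs vt ps j * c j) in
  forall rho, feasible e omega vs vt ps rho ->
    \sum_(j < V) c j * Ez omega vs rhohat j >=
    ps / lambda * \sum_(j < V) c j * Ez omega vs rho j.
Proof.
move=> _ _ omega01 _ /andP[/ltW ps_ge0 _] feasible_ex lambda_ge1 oracle c_gt0.
move=> rhohat rho feas_rho.
pose nu j := zeta e omega vs vt ps j * c j.
have nu_ge0 j : 0 <= nu j by rewrite mulr_ge0 ?(zeta_ge0 omega01 feasible_ex) ?ltW.
have [feas_rhohat rhohat_approx] := oracle nu nu_ge0.
have lambda_inv_ge0 : 0 <= lambda^-1 by rewrite invr_ge0 (le_trans ler01).
have upper : \sum_(j < V) c j * Ez omega vs rho j <= \sum_(j < V) Ivis rho j * nu j.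
  apply: ler_sum => j _; rewrite /nu mulrA [c j * _]mulrC ler_wpM2r ?(ltW (c_gt0 j)) //.
  exact: (Ez_le_Ivis_zeta omega01 feasible_ex).
have lower :
    ps * \sum_(j < V) Ivis rhohat j * nu j <= \sum_(j < V) c j * Ez omega vs rhohat j.
  rewrite mulr_sumr; apply: ler_sum => j _.
  rewrite /nu (mulrA (Ivis _ _)) [_ * c j]mulrC mulrCA ler_wpM2l ?(ltW (c_gt0 j)) //.
  exact: (Ivis_zeta_le_Ez omega01 feasible_ex).
apply: le_trans lower; rewrite -mulrA ler_wpM2l //.
by apply: le_trans (rhohat_approx rho feas_rho); rewrite ler_wpM2l.
Qed.
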